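(* Let $(x_n,y_n)_{n\in\mathbb Z}$ and $(x'_n,y'_n)_{n\in\mathbb Z}$ be two elliptic sequences in general position on the same biquadratic polynomial $F$, let $a\ne0$ and suppose $x'_0-x'_{-1}=2/a$. Let $f$ be defined on $\{x_n:n\ge0\}$ with $f(x_0)=c_0\ne0$ and $(\mathcal Df)(y_n)=a(\mathcal Mf)(y_n)$ for $n\ge0$, i.e. $f(x_{n+1})=\frac{1+a(x_{n+1}-x_n)/2}{1-a(x_{n+1}-x_n)/2}f(x_n)$ (assume $a(x_{n+1}-x_n)\ne2$). Let $(c_n)_{n\ge0}$ be the unique coefficients such that for every $N$ the sum $\sum_{n=0}^Nc_n\frac{(x-x_0)\cdots(x-x_{n-1})}{(x-x'_0)\cdots(x-x'_{n-1})}$ interpolates $f$ at $x_0,\dots,x_N$. Then for all $n\ge0$ $$c_n=\frac{x_n-x'_{n-1}}{x_0-x'_{-1}}\,\eta_0\eta_1\cdots\eta_{n-1}\,c_0,\qquad \eta_j=\frac{(x_j-x'_{-1})\big(1+a(x'_j-x'_{j-1})/2\big)}{(x'_j-x'_{-1})\big(1-a(x_{j+1}-x_j)/2\big)},$$ equivalently $\dfrac{c_{n+1}}{c_n}=\dfrac{(x_n-x'_{-1})(1+a(x'_n-x'_{n-1})/2)(x_{n+1}-x'_n)}{(x'_n-x'_{-1})(1-a(x_{n+1}-x_n)/2)(x_n-x'_{n-1})}$ for $n\ge1$.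
   Context: $F(x,y)=\sum_{i,j=0}^2c_{i,j}x^iy^j$ biquadratic. An elliptic sequence on $F$ is $(x_n,y_n)_{n\in\mathbb Z}$ such that for every $n$, $x_n,x_{n+1}$ are the two roots of $F(\cdot,y_n)$ and $y_{n-1},y_n$ the two roots of $F(x_n,\cdot)$; general position means all $x_n,x'_n$ distinct and all $y_n,y'_n$ distinct, with the leading coefficients $X_2(x)=\sum_ic_{i,2}x^i$, $Y_2(y)=\sum_jc_{2,j}y^j$ nonvanishing at these points. $(\mathcal Df)(y_n)=\frac{f(x_{n+1})-f(x_n)}{x_{n+1}-x_n}$, $(\mathcal Mf)(y_n)=\frac{f(x_n)+f(x_{n+1})}2$. Empty products equal $1$. *)

From HB Require Import structures.
From mathcomp Require Import all_boot all_order all_algebra.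
Set Implicit Arguments. Unset Strict Implicit. Unset Printing Implicit Defensive.
Import Order.TTheory GRing.Theory Num.Theory.
Local Open Scope ring_scope.

Section Defs.
Variable R : numClosedFieldType.

Definition bqF (c : nat -> nat -> R) (x y : R) : R :=
  \sum_(i < 3) \sum_(j < 3) c i j * x ^+ i * y ^+ j.

Definition X2 (c : nat -> nat -> R) (x : R) : R := \sum_(i < 3) c i 2%N * x ^+ i.
Definition Y2 (c : nat -> nat -> R) (y : R) : R := \sum_(j < 3) c 2%N j * y ^+ j.

(* Elliptic sequence: x_n, x_{n+1} are the two roots of F(., y_n) and
   y_{n-1}, y_n are the two roots of F(x_n, .). *)
Definition elliptic_seq (c : nat -> nat -> R) (x y : int -> R) : Prop :=
  forall n : int,
    (forall t : R, bqF c t (y n) = Y2 c (y n) * ((t - x n) * (t - x (n + 1)))) /\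
    (forall s : R, bqF c (x n) s = X2 c (x n) * ((s - y (n - 1)) * (s - y n))).

Definition general_position (c : nat -> nat -> R) (x y : int -> R) : Prop :=
  injective x /\ injective y /\
  (forall n : int, X2 c (x n) != 0 /\ Y2 c (y n) != 0).

(* Divided difference and mean operators at y_n. *)
Definition Dop (x : int -> R) (f : R -> R) (n : int) : R :=
  (f (x (n + 1)) - f (x n)) / (x (n + 1) - x n).
Definition Mop (x : int -> R) (f : R -> R) (n : int) : R :=
  (f (x n) + f (x (n + 1))) / 2.

Definition eta_coef (a : R) (x x' : int -> R) (j : nat) : R :=
  ((x j%:Z - x' (-1)) * (1 + a * (x' j%:Z - x' (j%:Z - 1)) / 2)) /
  ((x' j%:Z - x' (-1)) * (1 - a * (x (j%:Z + 1) - x j%:Z) / 2)).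

End Defs.

(* The difference equation D f = a M f says that f obeys a first-order
   recursion L f = 0 along x_0, x_1, ... .  For the rational basis
   phi_n(t) = prod_{i<n} (t - x_i)/(t - x'_i) ([rbasis n]), evaluating F(x'_j, y_m) in two ways
   turns (L phi_n)(m) / (x_{m+1} - x_m) into a rational function of y_m alone,
   namely A_n Psi_n(y_m) + B_n Psi_{n-1}(y_m) with
   Psi_k(y) = prod_{i<k} (y - y_i)/(y - y'_i) ([ybasis k]).  For the closed-form coefficients
   c_n the contributions cancel in pairs (c_{n-1} A_{n-1} + c_n B_n = 0 is an
   identity between four instances of the biquadratic relation, and the base case
   is where x'_0 - x'_{-1} = 2/a enters), so L applied to the N-th partial sum is
   a multiple of Psi_N(y_m), which vanishes for m < N.  Hence the partial sum
   satisfies the same recursion as f on x_0, ..., x_N and interpolates it; the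
   interpolation coefficients are unique since phi_n(x_n) <> 0 and
   phi_n(x_k) = 0 for k < n. *)
From HB Require Import structures.
From mathcomp Require Import all_boot all_order all_algebra.
From mathcomp Require Import ring zify.
Import Order.TTheory GRing.Theory Num.Theory.
Local Open Scope ring_scope.

Section Biquadratic.
Variables (R : numClosedFieldType) (c : nat -> nat -> R).

Definition Y1 (s : R) : R := \sum_(j < 3) c 1%N j * s ^+ j.
Definition Y0 (s : R) : R := \sum_(j < 3) c 0%N j * s ^+ j.

Lemma bqF_in_x t s : bqF c t s = Y0 s + Y1 s * t + Y2 c s * t ^+ 2.
Proof. by rewrite /bqF /Y0 /Y1 /Y2 !big_ord_recr !big_ord0 /= !expr0 !expr1; ring. Qed.

(* Both sides equal F(x2_k, y_m). *)
Lemma elliptic_cross (x y x2 y2 : int -> R) :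
  elliptic_seq c x y -> elliptic_seq c x2 y2 -> forall m k : int,
  Y2 c (y m) * ((x m - x2 k) * (x (m + 1) - x2 k)) =
  X2 c (x2 k) * ((y m - y2 (k - 1)) * (y m - y2 k)).
Proof.
move=> E1 E2 m k; rewrite -(E2 k).2 (E1 m).1; ring.
Qed.

Lemma elliptic_vieta (x y : int -> R) : elliptic_seq c x y -> forall m : int,
  Y2 c (y m) * (x m + x (m + 1)) = - Y1 (y m).
Proof.
move=> E m; have h1 := (E m).1 1; have h2 := (E m).1 (-1).
rewrite !bqF_in_x in h1 h2.
have h2n : (2 : R) != 0 by rewrite pnatr_eq0.
apply: (mulfI h2n).
have -> : 2 * - Y1 (y m) = (Y0 (y m) + Y1 (y m) * (-1) + Y2 c (y m) * (-1) ^+ 2)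
   - (Y0 (y m) + Y1 (y m) * 1 + Y2 c (y m) * 1 ^+ 2) by ring.
rewrite h1 h2; ring.
Qed.

End Biquadratic.
Arguments Y1 {R} c s.
Arguments elliptic_cross {R c x y x2 y2}.
Arguments elliptic_vieta {R c x y}.

Section NatProducts.
Context {R : fieldType}.

Lemma prod_nat_split (F : nat -> R) j n : (j < n)%N ->
  \prod_(0 <= i < n) F i = \prod_(0 <= i < j) F i * (F j * \prod_(j.+1 <= i < n) F i).
Proof.
by move=> hj; rewrite (big_cat_nat (leq0n j) (ltnW hj)) /= [\prod_(j <= i < n) _]big_ltn.
Qed.

Lemma prod_nat_neq0 (F : nat -> R) m n :
  (forall i, (m <= i < n)%N -> F i != 0) -> \prod_(m <= i < n) F i != 0.
Proof.
move=> h; rewrite prodf_seq_neq0; apply/allP => i.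
by rewrite mem_index_iota => hi; exact: h.
Qed.

Lemma prod_nat_eq0 (F : nat -> R) m n k :
  (m <= k < n)%N -> F k = 0 -> \prod_(m <= i < n) F i = 0.
Proof.
move=> hk h; apply/eqP; rewrite prodf_seq_eq0; apply/hasP; exists k.
  by rewrite mem_index_iota.
by rewrite h eqxx.
Qed.

Lemma size_sum_nat_leq (F : nat -> {poly R}) m k l :
  (forall j, (m <= j < k)%N -> (size (F j) <= l)%N) ->
  (size (\sum_(m <= j < k) F j)%R <= l)%N.
Proof.
move=> h; rewrite big_seq; elim/big_rec: _ => [|j r hj hr]; first by rewrite size_poly0.
rewrite (leq_trans (size_polyD _ _)) // geq_max hr andbT; apply: h.
by move: hj; rewrite mem_index_iota.
Qed.

Lemma size_prod_nat_XsubC (F : nat -> R) m k :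
  size (\prod_(m <= i < k) ('X - (F i)%:P)) = (k - m).+1.
Proof. by rewrite size_prod_XsubC size_iota. Qed.

Lemma horner_prod_nat_XsubC (F : nat -> R) m k t :
  (\prod_(m <= i < k) ('X - (F i)%:P)).[t] = \prod_(m <= i < k) (t - F i).
Proof. by rewrite horner_prod; apply: eq_bigr => i _; rewrite hornerXsubC. Qed.

Lemma horner_prod_seq_XsubC (F : nat -> R) k t :
  (\prod_(r <- [seq F i | i <- index_iota 0 k]) ('X - r%:P)).[t] = \prod_(0 <= i < k) (t - F i).
Proof. by rewrite big_map horner_prod_nat_XsubC. Qed.

Lemma size_sub_monic (A B : {poly R}) k : A \is monic -> B \is monic ->
  size A = k.+1 -> size B = k.+1 -> (size (A - B)%R <= k)%N.
Proof.
move=> /monicP mA /monicP mB sA sB; apply/leq_sizeP => j hj; rewrite coefB.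
case: (ltngtP j k) => hjk.
- lia.
- by rewrite !nth_default ?sA ?sB ?subrr.
- by subst j; move: mA mB; rewrite !lead_coefE sA sB /= => -> ->; rewrite subrr.
Qed.

End NatProducts.

Section PartialFractions.
Context {R : fieldType}.
Variables (n : nat) (p q : nat -> R).
Hypothesis q_inj : forall i j, (i < n)%N -> (j < n)%N -> q i = q j -> i = j.

Definition prod_omit j (t : R) :=
  \prod_(0 <= i < j) (t - q i) * \prod_(j.+1 <= i < n) (t - q i).
Definition pf_coef j := \prod_(0 <= i < n) (q j - p i) / prod_omit j (q j).

Lemma prod_omit_split j t : (j < n)%N ->
  \prod_(0 <= i < n) (t - q i) = prod_omit j t * (t - q j).
Proof. by move=> hj; rewrite (@prod_nat_split _ (fun i => t - q i) j n hj) /prod_omit; ring. Qed.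

Lemma prod_omit_self_neq0 j : (j < n)%N -> prod_omit j (q j) != 0.
Proof.
move=> hj; rewrite /prod_omit mulf_neq0 //; apply: prod_nat_neq0 => i /andP[h1 h2];
  rewrite subr_eq0; apply/eqP => e.
- by have := q_inj _ _ hj (ltn_trans h2 hj) e; lia.
- by have := q_inj _ _ hj h2 e; lia.
Qed.

Lemma prod_omit_other j k : (j < n)%N -> (k < n)%N -> j != k -> prod_omit j (q k) = 0.
Proof.
move=> hj hk hjk; rewrite /prod_omit; case: (ltngtP k j) => h.
- by rewrite (@prod_nat_eq0 _ _ 0 j k) ?mul0r ?subrr.
- by rewrite (@prod_nat_eq0 _ _ j.+1 n k) ?mulr0 ?subrr // h.
- by move: hjk; rewrite h eqxx.
Qed.

(* The defect of the partial fraction identity, cleared of denominators: a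
   polynomial of size at most n vanishing at the n distinct points q_k. *)
Definition pf_defect : {poly R} :=
  \prod_(0 <= i < n) ('X - (p i)%:P) - \prod_(0 <= i < n) ('X - (q i)%:P)
  - \sum_(0 <= j < n) (pf_coef j)%:P *
      (\prod_(0 <= i < j) ('X - (q i)%:P) * \prod_(j.+1 <= i < n) ('X - (q i)%:P)).

Lemma horner_pf_defect t : pf_defect.[t] =
  \prod_(0 <= i < n) (t - p i) - \prod_(0 <= i < n) (t - q i)
  - \sum_(0 <= j < n) pf_coef j * prod_omit j t.
Proof.
rewrite /pf_defect !hornerD !hornerN horner_sum !horner_prod_nat_XsubC.
by congr (_ - _); apply: eq_bigr => j _; rewrite hornerCM hornerM !horner_prod_nat_XsubC.
Qed.

Lemma pf_defect_root k : (k < n)%N -> root pf_defect (q k).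
Proof.
move=> hk; rewrite /root horner_pf_defect.
rewrite (@prod_nat_eq0 _ (fun i => q k - q i) 0 n k) ?subrr ?subr0 //.
rewrite [\sum_(0 <= j < n) _](bigD1_seq k) /= ?mem_index_iota ?iota_uniq //.
rewrite [X in pf_coef k * _ + X]big1_seq; last first.
  move=> j /andP[hjk]; rewrite mem_index_iota => /andP[_ hj].
  by rewrite prod_omit_other // ?mulr0 // eq_sym.
by rewrite addr0 /pf_coef divfK ?prod_omit_self_neq0 // subrr.
Qed.

Lemma pf_defect_eq0 : pf_defect = 0.
Proof.
apply: (@roots_geq_poly_eq0 _ _ [seq q i | i <- index_iota 0 n]).
- apply/allP => r /mapP [k]; rewrite mem_index_iota => /andP[_ hk] ->.
  exact: pf_defect_root.
- rewrite map_inj_in_uniq ?iota_uniq // => i j; rewrite !mem_index_iota.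
  by move=> /andP[_ hi] /andP[_ hj]; apply: q_inj.
rewrite size_map size_iota subn0 /pf_defect.
rewrite (leq_trans (size_polyD _ _)) // geq_max; apply/andP; split.
  by apply: size_sub_monic; rewrite ?monic_prod_XsubC ?size_prod_nat_XsubC ?subn0.
rewrite size_polyN; apply: size_sum_nat_leq => j /andP[_ hj].
rewrite mul_polyC (leq_trans (size_scale_leq _ _)) //.
by rewrite (leq_trans (size_polyMleq _ _)) // !size_prod_nat_XsubC; lia.
Qed.

Lemma prod_ratio_pf t : (forall i, (i < n)%N -> t != q i) ->
  \prod_(0 <= i < n) ((t - p i) / (t - q i)) = 1 + \sum_(0 <= j < n) pf_coef j / (t - q j).
Proof.
move=> ht; have hQ : \prod_(0 <= i < n) (t - q i) != 0.
  by apply: prod_nat_neq0 => i /andP[_ hi]; rewrite subr_eq0 ht.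
have hnum : \prod_(0 <= i < n) (t - p i) =
    \prod_(0 <= i < n) (t - q i) + \sum_(0 <= j < n) pf_coef j * prod_omit j t.
  by apply/eqP; rewrite -subr_eq0 opprD addrA -horner_pf_defect pf_defect_eq0 horner0.
rewrite prodf_div hnum mulrDl divff // mulr_suml; congr (_ + _).
apply: eq_big_seq => j; rewrite mem_index_iota => /andP[_ hj].
have htj : t - q j != 0 by rewrite subr_eq0 ht.
have hQj : prod_omit j t != 0.
  by move: hQ; rewrite (prod_omit_split j t hj) mulf_eq0 negb_or => /andP[].
by rewrite (prod_omit_split j t hj); field; rewrite htj hQj.
Qed.

End PartialFractions.

Section GapPoly.
Context {R : fieldType}.
Variables (n : nat) (z : nat -> R) (w : nat -> {poly R}).

(* sum_j w_j * prod_{k <= n, k <> j, j+1} (X - z_k): clearing the denominators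
   of sum_j w_j / ((X - z_j) (X - z_{j+1})). *)
Definition gap_poly : {poly R} := \sum_(0 <= j < n) w j *
  (\prod_(0 <= k < j) ('X - (z k)%:P) * \prod_(j.+2 <= k < n.+1) ('X - (z k)%:P)).

Lemma horner_gap_poly t : (forall k, (k <= n)%N -> t != z k) ->
  gap_poly.[t] = \prod_(0 <= k < n.+1) (t - z k) *
                 \sum_(0 <= j < n) (w j).[t] / ((t - z j) * (t - z j.+1)).
Proof.
move=> ht; rewrite /gap_poly horner_sum mulr_sumr; apply: eq_big_seq => j.
rewrite mem_index_iota => /andP[_ hj].
rewrite !hornerM !horner_prod_nat_XsubC.
rewrite (@prod_nat_split _ (fun k => t - z k) j n.+1) ?(ltnW (ltnS _)) //; last by lia.
rewrite [\prod_(j.+1 <= i < n.+1) _]big_ltn; last by lia.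
have h1 : t - z j != 0 by rewrite subr_eq0 ht //; lia.
have h2 : t - z j.+1 != 0 by rewrite subr_eq0 ht //; lia.
by field; rewrite h1 h2.
Qed.

Lemma gap_poly_last : (0 < n)%N ->
  gap_poly.[z n] = (w n.-1).[z n] * \prod_(0 <= k < n.-1) (z n - z k).
Proof.
rewrite /gap_poly horner_sum; case: n => // n' _ /=.
rewrite big_nat_recr //= big1_seq ?add0r.
  by rewrite !hornerM !horner_prod_nat_XsubC [\prod_(n'.+2 <= i < n'.+2) _]big_geq // mulr1.
move=> j; rewrite mem_index_iota => /andP[_ hj].
rewrite !hornerM !horner_prod_nat_XsubC.
by rewrite (@prod_nat_eq0 _ _ j.+2 n'.+2 n'.+1) ?mulr0 ?subrr //; lia.
Qed.

Lemma gap_poly_first : (0 < n)%N ->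
  gap_poly.[z 0] = (w 0).[z 0] * \prod_(2 <= k < n.+1) (z 0 - z k).
Proof.
move=> hn; rewrite /gap_poly horner_sum.
rewrite [\sum_(0 <= i < n) _]big_ltn //= [\sum_(1 <= i < n) _]big1_seq ?addr0.
  by rewrite !hornerM !horner_prod_nat_XsubC big_geq // mul1r.
move=> j; rewrite mem_index_iota => /andP[_ /andP[hj _]].
by rewrite !hornerM !horner_prod_nat_XsubC (@prod_nat_eq0 _ _ 0 j 0) ?mul0r ?mulr0 ?subrr.
Qed.

Lemma size_gap_poly s : (forall j, (size (w j) <= s)%N) -> (size gap_poly <= n + s - 1)%N.
Proof.
move=> hw; apply: size_sum_nat_leq => j /andP[_ hj].
rewrite (leq_trans (size_polyMleq _ _)) //.
have hprod : (size (\prod_(0 <= k < j) ('X - (z k)%:P) *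
                    \prod_(j.+2 <= k < n.+1) ('X - (z k)%:P))%R <= n)%N.
  by rewrite (leq_trans (size_polyMleq _ _)) // !size_prod_nat_XsubC -subn1; lia.
by rewrite -subn1 (leq_trans (leq_sub2r 1 (leq_add (hw j) hprod))) //; lia.
Qed.

End GapPoly.

Section PolyFacts.
Context {R : fieldType}.

Lemma poly_factor_uniq_roots (p : {poly R}) (rs : seq R) s :
  all (root p) rs -> uniq rs -> (size p <= size rs + s)%N ->
  exists l : {poly R}, (size l <= s)%N /\ p = l * \prod_(r <- rs) ('X - r%:P).
Proof.
move=> hr hu hs; have [l hl] := uniq_roots_prod_XsubC hr (etrans (uniq_rootsE rs) hu).
exists l; split=> //; have [->|l0] := eqVneq l 0; first by rewrite size_poly0.
move: hs; rewrite hl size_Mmonic ?monic_prod_XsubC // size_prod_XsubC addnS /=; lia.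
Qed.

Lemma horner_linear_interp (l : {poly R}) s t u : (size l <= 2)%N -> s != t ->
  l.[u] = l.[s] * (u - t) / (s - t) + l.[t] * (u - s) / (t - s).
Proof.
move=> hl hst; have hst' : s - t != 0 by rewrite subr_eq0.
have hts' : t - s != 0 by rewrite subr_eq0 eq_sym.
pose g := l - ((l.[s] / (s - t))%:P * ('X - t%:P) + (l.[t] / (t - s))%:P * ('X - s%:P)).
have g0 : g = 0.
  apply: (@roots_geq_poly_eq0 _ _ [:: s; t]).
  - by rewrite /= /root /g !hornerE /= andbT; apply/andP; split; apply/eqP;
      field; rewrite hst' hts'.
  - by rewrite /= inE andbT.
  rewrite /g /= (leq_trans (size_polyD _ _)) // geq_max hl size_polyN.
  rewrite (leq_trans (size_polyD _ _)) // geq_max.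
  by rewrite !mul_polyC !(leq_trans (size_scale_leq _ _)) // size_XsubC.
have /eqP := congr1 (horner^~ u) g0; rewrite /g !hornerE /= subr_eq0 => /eqP ->.
by field; rewrite hst' hts'.
Qed.

Definition quad_poly (a0 a1 a2 : R) : {poly R} := a0%:P + a1%:P * 'X + a2%:P * 'X^2.

Lemma horner_quad_poly a0 a1 a2 t : (quad_poly a0 a1 a2).[t] = a0 + a1 * t + a2 * t ^+ 2.
Proof. by rewrite /quad_poly !hornerE. Qed.

Lemma size_quad_poly a0 a1 a2 : (size (quad_poly a0 a1 a2) <= 3)%N.
Proof.
apply/leq_sizeP => j hj; rewrite /quad_poly !coefD !coefCM coefC coefX coefXn.
by case: j hj => [|[|[|j]]] //= _; rewrite !mulr0 !addr0.
Qed.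

End PolyFacts.

(* Read x1, x2, p0, pm, pn, pn1 as x_{N+1}, x_{N+2}, x'_0, x'_{-1}, x'_N, x'_{N+1},
   yn, yn1, qm, qn, qn1 as y_N, y_{N+1}, y'_{-1}, y'_N, y'_{N+1}, and the capitals as
   the values of Y2 and X2 there: eliminating X2(x_{N+1}) and X2(x'_{N+1}) between
   four biquadratic relations. *)
Lemma cross_relations_identity {R : idomainType}
    {x1 x2 p0 pm pn pn1 yn yn1 qm qn qn1 Yqn Yyn1 Yqm Xx1 Xpn1 : R} :
  Yqm * ((pm - x1) * (p0 - x1)) = Xx1 * ((qm - yn) * (qm - yn1)) ->
  Yqm * ((pm - pn1) * (p0 - pn1)) = Xpn1 * ((qm - qn) * (qm - qn1)) ->
  Yyn1 * ((x1 - pn1) * (x2 - pn1)) = Xpn1 * ((yn1 - qn) * (yn1 - qn1)) ->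
  Yqn * ((pn - x1) * (pn1 - x1)) = Xx1 * ((qn - yn) * (qn - yn1)) ->
  Yqm != 0 -> x1 - pn1 != 0 ->
  Yqn * (x1 - pn) * (pn1 - pm) * (yn1 - qm) * (yn1 - qn1) * (p0 - pn1) * (qm - yn) +
  (x2 - pn1) * (x1 - pm) * Yyn1 * (p0 - x1) * (qm - qn1) * (qn - qm) * (qn - yn) = 0.
Proof.
move=> R1 R2 R3 R4 h1 h2; apply: (@mulIf _ ((x1 - pn1) * Yqm)); first by rewrite mulf_neq0.
rewrite mul0r.
transitivity (- (Yqn * ((pn - x1) * (pn1 - x1))) * (Yqm * ((pm - pn1) * (p0 - pn1)))
                * ((yn1 - qm) * (yn1 - qn1) * (qm - yn))
              - (Yyn1 * ((x1 - pn1) * (x2 - pn1))) * (Yqm * ((pm - x1) * (p0 - x1)))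
                * ((qm - qn1) * (qn - qm) * (qn - yn))); first ring.
by rewrite R1 R2 R3 R4; ring.
Qed.

Lemma subr_neq0 {V : zmodType} [u v : V] : u != v -> u - v != 0.
Proof. by rewrite subr_eq0. Qed.

Lemma PoszS (m : nat) : (m.+1)%:Z = m%:Z + 1.
Proof. by rewrite -addn1 PoszD. Qed.

Lemma PoszSK (m : nat) : (m.+1)%:Z - 1 = m.
Proof. by rewrite PoszS addrK. Qed.

Section EllipticInterpolation.
Context {R : numClosedFieldType} {c : nat -> nat -> R} {x y x' y' : int -> R} {a : R}.
Hypotheses (E : elliptic_seq c x y) (E' : elliptic_seq c x' y')
  (G : general_position c x y) (G' : general_position c x' y')
  (xy_x'y' : forall n m : int, x n != x' m /\ y n != y' m)
  (a_neq0 : a != 0) (x'0E : x' 0 - x' (-1) = 2 / a)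
  (step_neq2 : forall n : nat, a * (x (n%:Z + 1) - x n%:Z) != 2).

Definition xs (i : nat) := x i%:Z.
Definition ys (i : nat) := y i%:Z.
Definition xps (i : nat) := x' i%:Z.
Definition yps (i : nat) := y' i%:Z.
Definition xnode (k : nat) := x' (k%:Z - 1).
Definition ynode (k : nat) := y' (k%:Z - 1).

Lemma xnode0 : xnode 0 = x' (-1). Proof. by rewrite /xnode sub0r. Qed.
Lemma xnodeS k : xnode k.+1 = xps k. Proof. by rewrite /xnode PoszS addrK. Qed.
Lemma ynode0 : ynode 0 = y' (-1). Proof. by rewrite /ynode sub0r. Qed.
Lemma ynodeS k : ynode k.+1 = yps k. Proof. by rewrite /ynode PoszS addrK. Qed.

Lemma xs_inj i j : xs i = xs j -> i = j. Proof. by move/(G.1) => [->]. Qed.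
Lemma ys_inj i j : ys i = ys j -> i = j. Proof. by move/(G.2.1) => [->]. Qed.
Lemma xps_inj i j : xps i = xps j -> i = j. Proof. by move/(G'.1) => [->]. Qed.
Lemma ynode_inj i j : ynode i = ynode j -> i = j.
Proof. by rewrite /ynode => /(G'.2.1) /eqP; rewrite (can_eq (subrK 1)) => /eqP [->]. Qed.

Lemma xs_neq_xps i j : xs i != xps j. Proof. exact: (xy_x'y' _ _).1. Qed.
Lemma xs_neq_x'm1 i : xs i != x' (-1). Proof. exact: (xy_x'y' _ _).1. Qed.
Lemma ys_neq_yps i j : ys i != yps j. Proof. exact: (xy_x'y' _ _).2. Qed.
Lemma ys_neq_ynode i j : ys i != ynode j. Proof. exact: (xy_x'y' _ _).2. Qed.
Lemma xps_neq_x'm1 i : xps i != x' (-1). Proof. by apply/eqP => /(G'.1). Qed.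
Lemma yps_neq_y'm1 i : yps i != y' (-1). Proof. by apply/eqP => /(G'.2.1). Qed.
Lemma Y2_ys_neq0 m : Y2 c (ys m) != 0. Proof. exact: (G.2.2 _).2. Qed.
Lemma Y2_y'm1_neq0 : Y2 c (y' (-1)) != 0. Proof. exact: (G'.2.2 _).2. Qed.
Lemma X2_xps_neq0 j : X2 c (xps j) != 0. Proof. exact: (G'.2.2 _).1. Qed.

Lemma xs_step_neq0 m : xs m.+1 - xs m != 0.
Proof. by rewrite subr_neq0 //; apply/eqP => /xs_inj; lia. Qed.

Lemma two_sub_step_neq0 m : 2 - a * (xs m.+1 - xs m) != 0.
Proof. by rewrite subr_eq0 eq_sym /xs PoszS. Qed.

Lemma step_factor_neq0 m : 1 - a * (xs m.+1 - xs m) / 2 != 0.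
Proof.
apply: contra (two_sub_step_neq0 m) => /eqP h.
have -> : 2 - a * (xs m.+1 - xs m) = 2 * (1 - a * (xs m.+1 - xs m) / 2) by field.
by rewrite h mulr0.
Qed.

Lemma cross_xs_xps m j : Y2 c (ys m) * ((xs m - xps j) * (xs m.+1 - xps j)) =
  X2 c (xps j) * ((ys m - ynode j) * (ys m - ynode j.+1)).
Proof. by rewrite ynodeS /xs /ys /xps /yps /ynode PoszS; apply: elliptic_cross. Qed.

Lemma vieta_xs m : Y1 c (ys m) = - (Y2 c (ys m) * (xs m + xs m.+1)).
Proof. by rewrite /xs /ys PoszS (elliptic_vieta E) opprK. Qed.

Lemma vieta_xps m : Y1 c (yps m) = - (Y2 c (yps m) * (xps m + xps m.+1)).
Proof. by rewrite /xps /yps PoszS (elliptic_vieta E') opprK. Qed.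

Lemma vieta_x'm1 : Y1 c (y' (-1)) = - (Y2 c (y' (-1)) * (x' (-1) + xps 0)).
Proof. by rewrite (elliptic_vieta E' (-1)) opprK. Qed.

Definition rbasis (n : nat) (t : R) := \prod_(0 <= i < n) ((t - xs i) / (t - xps i)).
Definition residue (n j : nat) := pf_coef n xs xps j.

Lemma rbasis_xs_pf n m :
  rbasis n (xs m) = 1 + \sum_(0 <= j < n) residue n j / (xs m - xps j).
Proof.
apply: prod_ratio_pf => [i j _ _|i _]; [exact: xps_inj | exact: xs_neq_xps].
Qed.

Lemma rbasis0 t : rbasis 0 t = 1. Proof. by rewrite /rbasis big_geq. Qed.

Lemma rbasis_xs_eq0 n m : (m < n)%N -> rbasis n (xs m) = 0.
Proof. by move=> hm; rewrite /rbasis (@prod_nat_eq0 _ _ 0 n m) // subrr mul0r. Qed.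

Lemma rbasis_xs_neq0 n m : (n <= m)%N -> rbasis n (xs m) != 0.
Proof.
move=> hm; apply: prod_nat_neq0 => i /andP[_ hi].
rewrite mulf_neq0 ?invr_eq0 ?subr_neq0 ?xs_neq_xps //.
by apply/eqP => /xs_inj h; lia.
Qed.

Lemma residue0 n :
  residue n 0 = \prod_(0 <= i < n) (xps 0 - xs i) / \prod_(1 <= i < n) (xps 0 - xps i).
Proof. by rewrite /residue /pf_coef /prod_omit [\prod_(0 <= i < 0) _]big_geq // mul1r. Qed.

(* With d = x_{m+1} - x_m, D f = a M f at y_m reads Lop f m = 0. *)
Definition Lop (g : R -> R) (m : nat) :=
  (1 - a * (xs m.+1 - xs m) / 2) * g (xs m.+1) - (1 + a * (xs m.+1 - xs m) / 2) * g (xs m).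

Lemma Lop_rbasis_eq0 n m : (m.+1 < n)%N -> Lop (rbasis n) m = 0.
Proof. by move=> h; rewrite /Lop !rbasis_xs_eq0 ?mulr0 ?subrr //; lia. Qed.

Lemma Lop_rbasis_pf n m : Lop (rbasis n) m / (xs m.+1 - xs m) =
  - a - \sum_(0 <= j < n) residue n j * ((1 - a * xps j) + a / 2 * (xs m + xs m.+1)) /
                          ((xs m - xps j) * (xs m.+1 - xps j)).
Proof.
set d := xs m.+1 - xs m; have hd : d != 0 := xs_step_neq0 m.
set Sv := \sum_(0 <= j < n) residue n j / (xs m.+1 - xps j).
set Su := \sum_(0 <= j < n) residue n j / (xs m - xps j).
transitivity ((- a * d + ((1 - a * d / 2) * Sv - (1 + a * d / 2) * Su)) / d).
  by rewrite /Lop !rbasis_xs_pf -/Sv -/Su -/d; field.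
rewrite /Sv /Su !mulr_sumr -sumrB mulrDl mulr_suml -sumrN; congr (_ + _).
  by field.
apply: eq_bigr => j _.
have h1 := subr_neq0 (xs_neq_xps m j); have h2 := subr_neq0 (xs_neq_xps m.+1 j).
by rewrite /d; field; rewrite ?h1 ?h2 ?hd.
Qed.

(* weight_poly j evaluated at y_m is Y2(y_m) (1 - a x'_j + a (x_m + x_{m+1}) / 2). *)
Definition weight_poly (j : nat) : {poly R} :=
  (1 - a * xps j)%:P * quad_poly (c 2 0) (c 2 1) (c 2 2)
  - (a / 2)%:P * quad_poly (c 1 0) (c 1 1) (c 1 2).

Lemma horner_weight_poly j t : (weight_poly j).[t] = (1 - a * xps j) * Y2 c t - a / 2 * Y1 c t.
Proof.
rewrite /weight_poly hornerD hornerN !hornerCM !horner_quad_poly /Y2 /Y1.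
by rewrite !big_ord_recr !big_ord0 /= !expr0 !expr1; ring.
Qed.

Lemma size_weight_poly j : (size (weight_poly j) <= 3)%N.
Proof.
rewrite /weight_poly (leq_trans (size_polyD _ _)) // geq_max size_polyN !mul_polyC.
by rewrite !(leq_trans (size_scale_leq _ _)) // size_quad_poly.
Qed.

Definition Dweight n j : {poly R} := (residue n j / X2 c (xps j))%:P.
Definition Lweight n j : {poly R} := Dweight n j * weight_poly j.

(* Dpoly n and Lpoly n interpolate in y_m the divided difference and Lop of
   rbasis n, with the denominators prod_{k <= n} (y_m - ynode k) cleared. *)
Definition Dpoly n := gap_poly n ynode (Dweight n).
Definition Lpoly n := - (a%:P * \prod_(0 <= k < n.+1) ('X - (ynode k)%:P))
                      - gap_poly n ynode (Lweight n).

Lemma size_Dpoly n : (size (Dpoly n) <= n)%N.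
Proof.
rewrite /Dpoly (leq_trans (@size_gap_poly _ n ynode (Dweight n) 1 _)) ?addn1 ?subn1 //.
by move=> j; exact: size_polyC_leq1.
Qed.

Lemma size_Lpoly n : (size (Lpoly n) <= n + 2)%N.
Proof.
rewrite /Lpoly (leq_trans (size_polyD _ _)) // geq_max !size_polyN.
rewrite (leq_trans (@size_gap_poly _ n ynode (Lweight n) 3 _)) ?andbT; last 2 first.
- by move=> j; rewrite /Lweight /Dweight mul_polyC (leq_trans (size_scale_leq _ _))
       ?size_weight_poly.
- lia.
by rewrite mul_polyC (leq_trans (size_scale_leq _ _)) // size_prod_nat_XsubC; lia.
Qed.

Lemma horner_Dpoly_ys n m : (Dpoly n).[ys m] = \prod_(0 <= k < n.+1) (ys m - ynode k) *
   (- (rbasis n (xs m.+1) - rbasis n (xs m)) / ((xs m.+1 - xs m) * Y2 c (ys m))).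
Proof.
rewrite /Dpoly horner_gap_poly; last by move=> k _; exact: ys_neq_ynode.
congr (_ * _); have hd := xs_step_neq0 m; have hY := Y2_ys_neq0 m.
transitivity (\sum_(0 <= j < n) (residue n j / (xs m - xps j)
     - residue n j / (xs m.+1 - xps j)) / ((xs m.+1 - xs m) * Y2 c (ys m))).
  apply: eq_bigr => j _; rewrite hornerC -mulrA -invfM -cross_xs_xps.
  have h1 := subr_neq0 (xs_neq_xps m j); have h2 := subr_neq0 (xs_neq_xps m.+1 j).
  by field; rewrite ?h1 ?h2 ?hd ?hY ?X2_xps_neq0.
rewrite -mulr_suml sumrB !rbasis_xs_pf; congr (_ / _).
by set A := \sum_(0 <= i < n) _; set B := \sum_(0 <= i < n) _; ring.
Qed.

Lemma horner_Lpoly_ys n m : (Lpoly n).[ys m] = \prod_(0 <= k < n.+1) (ys m - ynode k) *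
   (Lop (rbasis n) m / (xs m.+1 - xs m)).
Proof.
rewrite /Lpoly hornerD !hornerN hornerCM horner_prod_nat_XsubC.
rewrite horner_gap_poly; last by move=> k _; exact: ys_neq_ynode.
rewrite Lop_rbasis_pf mulrBr mulrN mulrC; congr (_ - _); congr (_ * _).
apply: eq_bigr => j _; rewrite /Lweight /Dweight hornerCM horner_weight_poly vieta_xs.
have h1 := subr_neq0 (xs_neq_xps m j); have h2 := subr_neq0 (xs_neq_xps m.+1 j).
have hX := X2_xps_neq0 j; have hY := Y2_ys_neq0 m.
have -> : (ys m - ynode j) * (ys m - ynode j.+1) =
    Y2 c (ys m) * ((xs m - xps j) * (xs m.+1 - xps j)) / X2 c (xps j).
  by rewrite cross_xs_xps; field.
by field; rewrite ?h1 ?h2 ?hX ?hY.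
Qed.

Lemma Dpoly_root n m : (m.+1 < n)%N -> root (Dpoly n) (ys m).
Proof.
by move=> h; rewrite /root horner_Dpoly_ys !rbasis_xs_eq0 ?subrr ?oppr0 ?mul0r ?mulr0 //; lia.
Qed.

Lemma Lpoly_root n m : (m.+1 < n)%N -> root (Lpoly n) (ys m).
Proof. by move=> h; rewrite /root horner_Lpoly_ys Lop_rbasis_eq0 ?mul0r ?mulr0. Qed.

(* This is where x'_0 - x'_{-1} = 2/a enters. *)
Lemma weight_poly0_ynode0 : (weight_poly 0).[ynode 0] = 0.
Proof.
rewrite horner_weight_poly ynode0 vieta_x'm1.
have -> : xps 0 = x' (-1) + 2 / a by rewrite -x'0E /xps; ring.
by field.
Qed.

Lemma Lpoly_root_ynode0 n : (0 < n)%N -> root (Lpoly n) (ynode 0).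
Proof.
move=> hn; rewrite /root /Lpoly hornerD !hornerN hornerCM horner_prod_nat_XsubC.
rewrite (@prod_nat_eq0 _ _ 0 n.+1 0) ?subrr // mulr0 oppr0 add0r.
by rewrite gap_poly_first // /Lweight hornerM weight_poly0_ynode0 !mulr0 mul0r oppr0.
Qed.

Definition Dlead n := (Dpoly n).[ynode 0] / \prod_(0 <= i < n.-1) (ynode 0 - ys i).

Lemma prod_ynode0_ys_neq0 k : \prod_(0 <= i < k) (ynode 0 - ys i) != 0.
Proof. by apply: prod_nat_neq0 => i _; rewrite subr_neq0 // eq_sym ys_neq_ynode. Qed.

Lemma horner_Dpoly n : (0 < n)%N ->
  forall t, (Dpoly n).[t] = Dlead n * \prod_(0 <= i < n.-1) (t - ys i).
Proof.
move=> hn; set rs := [seq ys i | i <- index_iota 0 n.-1].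
have roots : all (root (Dpoly n)) rs.
  apply/allP => r /mapP [i]; rewrite mem_index_iota => /andP[_ hi] ->.
  by apply: Dpoly_root; lia.
have urs : uniq rs by rewrite (map_inj_uniq ys_inj) iota_uniq.
have [|l [hl hD]] := @poly_factor_uniq_roots _ _ _ 1 roots urs.
  by rewrite size_map size_iota (leq_trans (size_Dpoly n)) //; lia.
move=> t; rewrite /Dlead hD !hornerM !horner_prod_seq_XsubC (size1_polyC hl) !hornerC.
by field; rewrite prod_ynode0_ys_neq0.
Qed.

Lemma Lpoly_factor n : (0 < n)%N -> exists l : {poly R}, (size l <= 2)%N /\
  forall t, (Lpoly n).[t] = l.[t] * ((t - ynode 0) * \prod_(0 <= i < n.-1) (t - ys i)).
Proof.
move=> hn; set rs := ynode 0 :: [seq ys i | i <- index_iota 0 n.-1].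
have roots : all (root (Lpoly n)) rs.
  rewrite /= Lpoly_root_ynode0 //=.
  apply/allP => r /mapP [i]; rewrite mem_index_iota => /andP[_ hi] ->.
  by apply: Lpoly_root; lia.
have urs : uniq rs.
  rewrite /= (map_inj_uniq ys_inj) iota_uniq andbT.
  by apply/mapP => -[i _ h]; move: (ys_neq_ynode i 0); rewrite -h eqxx.
have [|l [hl ->]] := @poly_factor_uniq_roots _ _ _ 2 roots urs.
  by rewrite /= size_map size_iota (leq_trans (size_Lpoly n)) //; lia.
by exists l; split=> // t; rewrite hornerM big_cons hornerM hornerXsubC horner_prod_seq_XsubC.
Qed.

Definition ybasis k t := \prod_(0 <= i < k) ((t - ys i) / (t - yps i)).

Lemma ybasis0 t : ybasis 0 t = 1. Proof. by rewrite /ybasis big_geq. Qed.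

Lemma ybasis_ys_eq0 n m : (m < n)%N -> ybasis n (ys m) = 0.
Proof. by move=> h; rewrite /ybasis (@prod_nat_eq0 _ _ 0 n m) // subrr mul0r. Qed.

(* Lpoly n divided by (t - ynode 0) prod_{i < n-1} (t - ys i) is linear; Acoef n and
   Bcoef n are its values at ynode n and ys (n-1), scaled to be the coefficients
   in Lop_rbasis_decomp. *)
Definition Acoef n :=
  (Lpoly n).[ynode n] / ((ynode n - ynode 0) * \prod_(0 <= i < n) (ynode n - ys i)).
Definition Bcoef n := (Lpoly n).[ys n.-1] /
  ((ys n.-1 - ynode 0) * \prod_(0 <= i < n.-1) (ys n.-1 - ys i) * (ys n.-1 - ynode n)).

Lemma Lop_rbasis_Lpoly n m : Lop (rbasis n) m =
  (xs m.+1 - xs m) * ((Lpoly n).[ys m] / \prod_(0 <= k < n.+1) (ys m - ynode k)).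
Proof.
have hP : \prod_(0 <= k < n.+1) (ys m - ynode k) != 0.
  by apply: prod_nat_neq0 => k _; rewrite subr_neq0 // ys_neq_ynode.
by rewrite horner_Lpoly_ys; field; rewrite hP xs_step_neq0.
Qed.

Lemma Lop_rbasis_decomp N m : Lop (rbasis N.+1) m =
  (xs m.+1 - xs m) * (Acoef N.+1 * ybasis N.+1 (ys m) + Bcoef N.+1 * ybasis N (ys m)).
Proof.
have [l [hl hL]] := @Lpoly_factor N.+1 (ltn0Sn N).
rewrite Lop_rbasis_Lpoly; congr (_ * _); set t := ys m.
have hnodes : \prod_(0 <= k < N.+2) (t - ynode k) =
    (t - ynode 0) * (\prod_(0 <= i < N) (t - yps i) * (t - yps N)).
  rewrite big_ltn // big_add1 /= big_nat_recr //=.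
  by congr (_ * (_ * _)); [apply: eq_bigr => i _|]; rewrite ynodeS.
have hsn : ynode N.+1 != ys N by rewrite eq_sym ys_neq_ynode.
rewrite hnodes hL /= (horner_linear_interp _ _ _ t hl hsn).
rewrite /Acoef /Bcoef !hL /= !big_nat_recr //= /ybasis !prodf_div !big_nat_recr //= !ynodeS.
set PY := \prod_(0 <= i < N) (t - ys i).
set PQ := \prod_(0 <= i < N) (t - yps i).
set PZ := \prod_(0 <= i < N) (yps N - ys i).
set PW := \prod_(0 <= i < N) (ys N - ys i).
have hPQ : PQ != 0 by apply: prod_nat_neq0 => i _; rewrite subr_neq0 // ys_neq_yps.
have hPZ : PZ != 0 by apply: prod_nat_neq0 => i _; rewrite subr_neq0 // eq_sym ys_neq_yps.
have hPW : PW != 0.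
  by apply: prod_nat_neq0 => i /andP[_ hi]; rewrite subr_neq0 //; apply/eqP => /ys_inj; lia.
have h1 : t - ynode 0 != 0 by rewrite subr_neq0 // ys_neq_ynode.
have h2 : t - yps N != 0 by rewrite subr_neq0 // ys_neq_yps.
have h3 : yps N - ynode 0 != 0 by rewrite -ynodeS subr_neq0 //; apply/eqP => /ynode_inj.
have h4 : ys N - ynode 0 != 0 by rewrite subr_neq0 // ys_neq_ynode.
have h5 : yps N - ys N != 0 by rewrite subr_neq0 // eq_sym ys_neq_yps.
have h6 : ys N - yps N != 0 by rewrite subr_neq0 // ys_neq_yps.
by field; rewrite ?hPQ ?hPZ ?hPW ?h1 ?h2 ?h3 ?h4 ?h5 ?h6.
Qed.

Lemma weight_poly_ynodeS N :
  (weight_poly N).[ynode N.+1] = Y2 c (yps N) * (1 + a * (xps N.+1 - xps N) / 2).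
Proof. by rewrite horner_weight_poly ynodeS vieta_xps; field. Qed.

Lemma AcoefE N : Acoef N.+1 = - (Y2 c (yps N) * (1 + a * (xps N.+1 - xps N) / 2)) *
  Dlead N.+1 / ((ynode N.+1 - ynode 0) * (ynode N.+1 - ys N)).
Proof.
have hL : (Lpoly N.+1).[ynode N.+1] = - (weight_poly N).[ynode N.+1] * (Dpoly N.+1).[ynode N.+1].
  rewrite /Lpoly hornerD !hornerN hornerCM horner_prod_nat_XsubC.
  rewrite (@prod_nat_eq0 _ _ 0 N.+2 N.+1 (ltnSn _)) ?subrr //.
  by rewrite /Dpoly !gap_poly_last //= /Lweight /Dweight hornerM !hornerC; ring.
rewrite /Acoef hL weight_poly_ynodeS (@horner_Dpoly N.+1 (ltn0Sn N)) /= big_nat_recr //=.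
have hP : \prod_(0 <= i < N) (ynode N.+1 - ys i) != 0.
  by apply: prod_nat_neq0 => i _; rewrite subr_neq0 // eq_sym ys_neq_ynode.
have h3 : ynode N.+1 - ynode 0 != 0 by rewrite subr_neq0 //; apply/eqP => /ynode_inj.
have h5 : ynode N.+1 - ys N != 0 by rewrite subr_neq0 // eq_sym ys_neq_ynode.
by field; rewrite ?hP ?h3 ?h5.
Qed.

Lemma BcoefE N : Bcoef N.+1 = - ((1 - a * (xs N.+1 - xs N) / 2) * Y2 c (ys N)) *
  Dlead N.+1 / ((ys N - ynode 0) * (ys N - ynode N.+1)).
Proof.
have hL : (Lpoly N.+1).[ys N] =
    - ((1 - a * (xs N.+1 - xs N) / 2) * Y2 c (ys N)) * (Dpoly N.+1).[ys N].
  rewrite horner_Lpoly_ys horner_Dpoly_ys /Lop (@rbasis_xs_eq0 N.+1 N) //.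
  by field; rewrite xs_step_neq0 Y2_ys_neq0.
rewrite /Bcoef /= hL (@horner_Dpoly N.+1 (ltn0Sn N)) /=.
have hP : \prod_(0 <= i < N) (ys N - ys i) != 0.
  by apply: prod_nat_neq0 => i /andP[_ hi]; rewrite subr_neq0 //; apply/eqP => /ys_inj; lia.
have h4 : ys N - ynode 0 != 0 by rewrite subr_neq0 // ys_neq_ynode.
have h6 : ys N - ynode N.+1 != 0 by rewrite subr_neq0 // ys_neq_ynode.
by field; rewrite ?hP ?h4 ?h6.
Qed.

Lemma DleadE N : Dlead N.+1 = residue N.+1 0 / X2 c (xps 0) *
  \prod_(2 <= k < N.+2) (ynode 0 - ynode k) / \prod_(0 <= i < N) (ynode 0 - ys i).
Proof. by rewrite /Dlead /Dpoly gap_poly_first // /Dweight hornerC. Qed.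

Lemma Dlead1 : Dlead 1 = (xps 0 - xs 0) / X2 c (xps 0).
Proof.
rewrite DleadE residue0 [\prod_(2 <= k < 2) _]big_geq // [\prod_(1 <= i < 1) _]big_geq //.
by rewrite [\prod_(0 <= i < 0) _]big_geq // big_nat1 !divr1 mulr1.
Qed.

Lemma DleadS N : Dlead N.+2 = Dlead N.+1 *
  ((xps 0 - xs N.+1) * (ynode 0 - ynode N.+2)) / ((xps 0 - xps N.+1) * (ynode 0 - ys N)).
Proof.
rewrite !DleadE !residue0.
rewrite [\prod_(0 <= i < N.+2) (xps 0 - xs i)]big_nat_recr //=.
rewrite [\prod_(1 <= i < N.+2) (xps 0 - xps i)]big_nat_recr //=.
rewrite [\prod_(2 <= k < N.+3) (ynode 0 - ynode k)]big_nat_recr //=.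
rewrite [\prod_(0 <= i < N.+1) (ynode 0 - ys i)]big_nat_recr //=.
have hA2 : \prod_(1 <= i < N.+1) (xps 0 - xps i) != 0.
  by apply: prod_nat_neq0 => i /andP[hi _]; rewrite subr_neq0 //; apply/eqP => /xps_inj; lia.
have h1 : xps 0 - xps N.+1 != 0 by rewrite subr_neq0 //; apply/eqP => /xps_inj.
have h2 : ynode 0 - ys N != 0 by rewrite subr_neq0 // eq_sym ys_neq_ynode.
by field; rewrite ?hA2 ?prod_ynode0_ys_neq0 ?X2_xps_neq0 ?h1 ?h2.
Qed.

Definition cform (c0 : R) (n : nat) :=
  (xs n - xnode n) / (xs 0 - x' (-1)) * (\prod_(j < n) eta_coef a x x' j) * c0.

Lemma eta_coefE j : eta_coef a x x' j = (xs j - x' (-1)) * (1 + a * (xps j - xnode j) / 2) /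
   ((xps j - x' (-1)) * (1 - a * (xs j.+1 - xs j) / 2)).
Proof. by rewrite /eta_coef /xs /xps /xnode PoszS. Qed.

Lemma cform0 c0 : cform c0 0 = c0.
Proof. by rewrite /cform big_ord0 xnode0 mulr1 divff ?mul1r // subr_neq0 ?xs_neq_x'm1. Qed.

Lemma cformS c0 n :
  cform c0 n.+1 * (xs n - xnode n) = cform c0 n * (xs n.+1 - xnode n.+1) * eta_coef a x x' n.
Proof. by rewrite /cform big_ord_recr /=; ring. Qed.

Lemma cform_base c0 : - a * cform c0 0 + cform c0 1 * Bcoef 1 = 0.
Proof.
rewrite cform0 /cform big_ord_recr big_ord0 /= mul1r eta_coefE BcoefE Dlead1 xnode0 xnodeS.
have -> : (ys 0 - ynode 0) * (ys 0 - ynode 1) =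
    Y2 c (ys 0) * ((xs 0 - xps 0) * (xs 1 - xps 0)) / X2 c (xps 0).
  by rewrite cross_xs_xps; field; rewrite X2_xps_neq0.
have -> : xps 0 - x' (-1) = 2 / a by [].
have n1 := subr_neq0 (xs_neq_x'm1 0); have n2 := subr_neq0 (xs_neq_xps 0 0).
have n3 := subr_neq0 (xs_neq_xps 1 0).
by field; rewrite ?a_neq0 ?n1 ?n2 ?n3 ?two_sub_step_neq0 ?X2_xps_neq0 ?Y2_ys_neq0.
Qed.

Lemma cancellation_identity N :
  Y2 c (yps N) * (xs N.+1 - xps N) * (xps N.+1 - x' (-1)) * (ys N.+1 - y' (-1)) *
    (ys N.+1 - yps N.+1) * (xps 0 - xps N.+1) * (y' (-1) - ys N) +
  (xs N.+2 - xps N.+1) * (xs N.+1 - x' (-1)) * Y2 c (ys N.+1) * (xps 0 - xs N.+1) *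
    (y' (-1) - yps N.+1) * (yps N - y' (-1)) * (yps N - ys N) = 0.
Proof.
have R1 := elliptic_cross E' E (-1) N.+1; have R2 := elliptic_cross E' E' (-1) N.+1.
have R3 := cross_xs_xps N.+1 N.+1; have R4 := elliptic_cross E' E N N.+1.
rewrite addNr PoszSK in R1 R2; rewrite !ynodeS in R3; rewrite PoszSK -PoszS in R4.
exact: cross_relations_identity R1 R2 R3 R4 Y2_y'm1_neq0 (subr_neq0 (xs_neq_xps N.+1 N.+1)).
Qed.

Lemma cform_cancel c0 N : cform c0 N.+1 * Acoef N.+1 + cform c0 N.+2 * Bcoef N.+2 = 0.
Proof.
have hne : xs N.+1 - xnode N.+1 != 0 by rewrite xnodeS subr_neq0 // xs_neq_xps.
apply: (mulIf hne); rewrite mul0r mulrDl [cform c0 N.+2 * _ * _]mulrAC cformS.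
transitivity (cform c0 N.+1 * (Acoef N.+1 * (xs N.+1 - xnode N.+1) +
  (xs N.+2 - xnode N.+2) * eta_coef a x x' N.+1 * Bcoef N.+2)); first ring.
rewrite [X in _ * X](_ : _ = 0) ?mulr0 //.
rewrite AcoefE BcoefE eta_coefE DleadS !xnodeS !ynodeS ynode0.
have K0 := cancellation_identity N.
set T1 := Y2 c (yps N) * _ * _ * _ * _ * _ * _ in K0.
set T2 := (xs N.+2 - xps N.+1) * _ * _ * _ * _ * _ * _ in K0.
have n1 : yps N - y' (-1) != 0 by rewrite subr_neq0 // yps_neq_y'm1.
have n2 : yps N - ys N != 0 by rewrite subr_neq0 // eq_sym ys_neq_yps.
have n3 : xps N.+1 - x' (-1) != 0 by rewrite subr_neq0 // xps_neq_x'm1.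
have n4 : ys N.+1 - y' (-1) != 0 by rewrite -ynode0 subr_neq0 // ys_neq_ynode.
have n5 : ys N.+1 - yps N.+1 != 0 by rewrite subr_neq0 // ys_neq_yps.
have n6 : xps 0 - xps N.+1 != 0 by rewrite subr_neq0 //; apply/eqP => /xps_inj.
have n7 : y' (-1) - ys N != 0 by rewrite -ynode0 subr_neq0 // eq_sym ys_neq_ynode.
transitivity (- ((1 + a * (xps N.+1 - xps N) / 2) * Dlead N.+1) * (T1 + T2) /
  ((yps N - y' (-1)) * (yps N - ys N) * (xps N.+1 - x' (-1)) * (ys N.+1 - y' (-1)) *
   (ys N.+1 - yps N.+1) * (xps 0 - xps N.+1) * (y' (-1) - ys N))).
  by rewrite /T1 /T2; field; rewrite ?two_sub_step_neq0 ?n1 ?n2 ?n3 ?n4 ?n5 ?n6 ?n7.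
by rewrite K0 mulr0 mul0r.
Qed.

Definition partial_sum c0 n t := \sum_(0 <= j < n.+1) cform c0 j * rbasis j t.

Definition tail_coef c0 n := if n is 0 then - a * cform c0 0 else cform c0 n * Acoef n.

Lemma Lop_partial_sum c0 n m :
  Lop (partial_sum c0 n) m = (xs m.+1 - xs m) * tail_coef c0 n * ybasis n (ys m).
Proof.
have Lop_sum k : Lop (partial_sum c0 k) m = \sum_(0 <= j < k.+1) cform c0 j * Lop (rbasis j) m.
  by rewrite /Lop /partial_sum !mulr_sumr -sumrB; apply: eq_bigr => j _; ring.
elim: n => [|n IH].
  by rewrite Lop_sum big_nat1 /Lop !rbasis0 ybasis0 /=; field.
rewrite Lop_sum big_nat_recr //= -Lop_sum IH Lop_rbasis_decomp.
have hcancel : tail_coef c0 n + cform c0 n.+1 * Bcoef n.+1 = 0.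
  by case: n {IH} => [|N] /=; [exact: cform_base | exact: cform_cancel].
transitivity ((xs m.+1 - xs m) * (cform c0 n.+1 * Acoef n.+1) * ybasis n.+1 (ys m) +
  (xs m.+1 - xs m) * ybasis n (ys m) * (tail_coef c0 n + cform c0 n.+1 * Bcoef n.+1)).
  by ring.
by rewrite hcancel mulr0 addr0.
Qed.

Lemma partial_sum_xs0 c0 n : partial_sum c0 n (xs 0) = c0.
Proof.
rewrite /partial_sum big_ltn // rbasis0 mulr1 cform0 big1_seq ?addr0 // => j.
by rewrite mem_index_iota => /andP[_ /andP[hj _]]; rewrite rbasis_xs_eq0 ?mulr0.
Qed.

(* L f = 0 is a first-order recursion along the x_k, since the leading factor
   1 - a (x_{k+1} - x_k) / 2 never vanishes. *)
Lemma partial_sum_interp {f : R -> R} n k : (forall m, Lop f m = 0) ->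
  (k <= n)%N -> partial_sum (f (xs 0)) n (xs k) = f (xs k).
Proof.
move=> Lf; elim: k => [|k IH] hk; first by rewrite partial_sum_xs0.
have h1 := Lop_partial_sum (f (xs 0)) n k.
rewrite ybasis_ys_eq0 // mulr0 /Lop in h1; have h2 := Lf k; rewrite /Lop in h2.
apply: (mulfI (step_factor_neq0 k)).
by rewrite -[LHS]subr0 -h1 -[RHS]subr0 -h2 IH 1?ltnW //; ring.
Qed.

Lemma Lop_eq0 (f : R -> R) : (forall n : nat, Dop x f n = a * Mop x f n) ->
  forall m, Lop f m = 0.
Proof.
move=> hD m; move: (hD m); rewrite /Dop /Mop /Lop -PoszS -/(xs m) -/(xs m.+1) => h.
have hd := xs_step_neq0 m.
transitivity ((f (xs m.+1) - f (xs m)) - a * ((f (xs m) + f (xs m.+1)) / 2) * (xs m.+1 - xs m)).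
  by field.
by rewrite -h divfK ?subrr.
Qed.

(* The interpolation conditions form a triangular system with nonzero diagonal. *)
Lemma interp_coef_unique (u v : nat -> R) :
  (forall n, \sum_(0 <= j < n.+1) u j * rbasis j (xs n) =
             \sum_(0 <= j < n.+1) v j * rbasis j (xs n)) -> forall n, u n = v n.
Proof.
move=> huv; elim/ltn_ind => n IH; move: (huv n); rewrite !big_nat_recr //=.
rewrite (eq_big_nat _ _ (F2 := fun j => v j * rbasis j (xs n))); last first.
  by move=> j /andP[_ hj]; rewrite IH.
by move/addrI; apply: mulIf; exact: rbasis_xs_neq0.
Qed.

Lemma interp_coef_closed_form (f : R -> R) (cf : nat -> R) :
  (forall n : nat, Dop x f n = a * Mop x f n) ->
  (forall N k : nat, (k <= N)%N ->
     \sum_(n < N.+1) cf n * \prod_(i < n) ((x k - x i) / (x k - x' i)) = f (x k)) ->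
  forall n, cf n = cform (f (xs 0)) n.
Proof.
move=> hD hI; apply: interp_coef_unique => n.
transitivity (f (xs n)); last exact: esym (partial_sum_interp n n (Lop_eq0 f hD) (leqnn n)).
rewrite -(hI n n (leqnn n)) big_mkord.
by apply: eq_bigr => j _; rewrite /rbasis big_mkord.
Qed.

End EllipticInterpolation.

Theorem mainTheorem10 (R : numClosedFieldType) (c : nat -> nat -> R)
  (x y x' y' : int -> R) (a : R) (f : R -> R) (cf : nat -> R) :
  elliptic_seq c x y -> elliptic_seq c x' y' ->
  general_position c x y -> general_position c x' y' ->
  (forall n m : int, x n != x' m /\ y n != y' m) ->
  a != 0 ->
  x' 0 - x' (-1) = 2 / a ->
  f (x 0) = cf 0%N -> cf 0%N != 0 ->
  (forall n : nat, a * (x (n%:Z + 1) - x n%:Z) != 2) ->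
  (forall n : nat, Dop x f n%:Z = a * Mop x f n%:Z) ->
  (forall (N k : nat), (k <= N)%N ->
     \sum_(n < N.+1) cf n *
        \prod_(i < n) ((x k%:Z - x i%:Z) / (x k%:Z - x' i%:Z)) = f (x k%:Z)) ->
  forall n : nat,
    cf n = (x n%:Z - x' (n%:Z - 1)) / (x 0 - x' (-1)) *
           (\prod_(j < n) eta_coef a x x' j) * cf 0%N.
Proof.
move=> E E' G G' xy_x'y' a_neq0 x'0E f_x0 _ step_neq2 hD hI n.
rewrite -f_x0.
exact: interp_coef_closed_form E E' G G' xy_x'y' a_neq0 x'0E step_neq2 f cf hD hI n.
Qed.
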